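(* For each integer $g\ge 3$ there exists a nonempty congruence family of genus $g$ hyperelliptic curves over $\mathbb{Q}$ with a rational Weierstrass point $\infty$ such that every curve $C$ in the family has good reduction at $3$ and satisfies $C_{\mathbb{F}_3}(\mathbb{F}_3)=\{\overline{\infty}\}$ and $C_{\mathbb{F}_3}(\mathbb{F}_9)=\{\overline{\infty},(0,\pm\alpha),(1,\pm\alpha),(2,\pm\alpha)\}$ for some $\alpha\in\mathbb{F}_9\setminus\mathbb{F}_3$.
   Context: A genus $g$ hyperelliptic curve over $\mathbb{Q}$ with a marked rational Weierstrass point $\infty$ has a unique minimal affine model $y^2=x^{2g+1}+a_2x^{2g-1}+\dots+a_{2g+1}$ with integer coefficients, separable right-hand side, $\infty$ the point at infinity, and no prime $p$ with $p^{2i}\mid a_i$ for all $i\ge2$. A congruence family is the set of such curves whose minimal-equation coefficients satisfy a given finite set of congruence conditions. $C_{\mathbb{F}_3}$ denotes the reduction mod $3$ of the minimal model, with points written in the affine coordinates $(x,y)$ together with the reduction $\overline{\infty}$ of $\infty$. *)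

From HB Require Import structures.
From mathcomp Require Import all_boot all_order all_algebra all_field.
Set Implicit Arguments. Unset Strict Implicit. Unset Printing Implicit Defensive.
Import Order.TTheory GRing.Theory Num.Theory.
Local Open Scope ring_scope.

(* A genus g minimal affine model  y^2 = f(x)  is encoded by the integer
   polynomial f = x^(2g+1) + a_2 x^(2g-1) + ... + a_(2g+1). *)

Definition coef_a (g : nat) (f : {poly int}) (i : nat) : int := f`_(2 * g + 1 - i).

Definition poly_Q (f : {poly int}) : {poly rat} := map_poly (fun z : int => z%:~R) f.

(* f is the right-hand side of the (unique) minimal model of a genus g
   hyperelliptic curve over Q with marked rational Weierstrass point at infinity *)
Definition is_min_model (g : nat) (f : {poly int}) : Prop :=
  [/\ f \is monic, size f = (2 * g + 2)%N, f`_(2 * g) = 0,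
      separable_poly (poly_Q f) &
      forall p : nat, prime p ->
        ~ (forall i : nat, (2 <= i <= 2 * g + 1)%N ->
             ((p ^ (2 * i))%:Z %| coef_a g f i)%Z)].

(* A congruence condition (i, m, r) : a_i = r (mod m), with m > 0 and
   2 <= i <= 2g+1. *)
Definition valid_cond (g : nat) (c : nat * int * int) : bool :=
  [&& (2 <= c.1.1 <= 2 * g + 1)%N & (0 < c.1.2)%R].

Definition sat_cond (g : nat) (f : {poly int}) (c : nat * int * int) : bool :=
  (coef_a g f c.1.1 == c.2 %[mod c.1.2])%Z.

Definition in_family (g : nat) (conds : seq (nat * int * int)) (f : {poly int}) : Prop :=
  is_min_model g f /\ all (sat_cond g f) conds.

Definition red (F : nzRingType) (f : {poly int}) : {poly F} :=
  map_poly (fun z : int => z%:~R) f.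

(* good reduction at 3: the reduction mod 3 of the minimal model is smooth,
   i.e. f mod 3 is separable (p = 3 odd, deg f odd so infinity is smooth) *)
Definition good_red3 (f : {poly int}) : Prop := separable_poly (red 'F_3 f).

Definition aff_pt (F : nzRingType) (f : {poly int}) (x y : F) : Prop :=
  y ^+ 2 = (red F f).[x].

From HB Require Import structures.
From mathcomp Require Import all_boot all_order all_algebra all_field.
From mathcomp Require Import ring zify.
Set Implicit Arguments.
Unset Strict Implicit.
Unset Printing Implicit Defensive.
Import Order.TTheory GRing.Theory Num.Theory.
Local Open Scope ring_scope.

(* Take [H = X^n - X^e - 1] with [n = 2g + 1] and [e = 3n (mod 8)] (and
   [H = X^9 + X^3 + X - 1] for [g = 4]); the family consists of the minimal
   models congruent to [H] mod 3.  On F_9 one has [x^e = (x^n)^3], so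
   [H(x) = u - u^3 - 1] with [u = x^n], and [u] lies in F_3 exactly when [x]
   does, as [n] is odd.  For [u] in F_3 this is [-1], a non-square of F_3 whose
   square roots [+-alpha] lie in F_9.  Otherwise [t = u^3 - u] satisfies
   [t^3 = -t] by Frobenius, hence [t^2 = -1] and [(t + 1)^4 = (2t)^2 = -1], so
   [H(x)] is a non-square of F_9.  Mod 3, [H'] is [c X^a (X^2 - 1)^b] (except
   for [g = 3], settled by a Bezout identity), so [H] is separable since
   [H = -1] on F_3; a resultant argument lifts separability to Q, and the
   constant term [-1] makes the model minimal. *)

Lemma rmorph_resultant (aR rR : comNzRingType) (f : {rmorphism aR -> rR})
    (p q : {poly aR}) :
    f (lead_coef p) != 0 -> f (lead_coef q) != 0 ->
  f (resultant p q) = resultant (map_poly f p) (map_poly f q).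
Proof.
move=> nz_fp nz_fq; rewrite /resultant /Sylvester_mx !size_map_poly_id0 //.
rewrite -det_map_mx /= map_col_mx; congr (\det (col_mx _ _));
  by apply: map_lin1_mx => v; rewrite map_poly_rV rmorphM /= map_rVpoly.
Qed.

Lemma coprimep_resultant (K : fieldType) (p q : {poly K}) :
  p != 0 -> coprimep p q = (resultant p q != 0).
Proof.
move=> p0; rewrite resultant_eq0 /coprimep -leqNgt.
have : gcdp p q != 0 by rewrite gcdp_eq0 negb_and p0.
by rewrite -size_poly_gt0; case: (size _) => [|[|n]].
Qed.

Lemma lead_coef_derivBXmul (R : nzRingType) (p : {poly R}) :
  p \is monic -> lead_coef (p^`() - 'X * p) = -1.
Proof.
move=> mon_p; have p_neq0 : p != 0 by apply: monic_neq0.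
rewrite addrC lead_coefDl.
  by rewrite lead_coefN -commr_polyX lead_coefMX (eqP mon_p).
rewrite size_polyN -commr_polyX size_mulX //.
exact: leq_trans (lt_size_deriv p_neq0) _.
Qed.

(* [H^`() - 'X * H] has the same gcd with [H] as [H^`()] but leading
   coefficient [-1], so its resultant with [H] commutes with every reduction. *)
Lemma separable_red_resultant (K : fieldType) (H : {poly int}) :
  H \is monic ->
  separable_poly (red K H) = ((resultant H (H^`() - 'X * H))%:~R != 0 :> K).
Proof.
move=> mon_H; have mon_HK : red K H \is monic by apply: monic_map.
rewrite unlock /separable_poly -(coprimep_addl_mul (- 'X)) mulNr addrC.
rewrite coprimep_resultant ?monic_neq0 // (@rmorph_resultant _ _ (intmul 1)).
- by rewrite /red rmorphB rmorphM /= map_polyX deriv_map.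
- by rewrite (eqP mon_H) rmorph1 oner_neq0.
- by rewrite lead_coef_derivBXmul // rmorphN1 oppr_eq0 oner_neq0.
Qed.

Lemma separable_red_rat (K : fieldType) (H : {poly int}) :
  H \is monic -> separable_poly (red K H) -> separable_poly (red rat H).
Proof.
move=> mon_H; rewrite !separable_red_resultant // intr_eq0.
by apply: contraNneq => ->; rewrite mulr0z.
Qed.

Lemma deriv1 (R : nzRingType) : (1 : {poly R})^`() = 0.
Proof. by rewrite -polyC1 derivC. Qed.

Lemma separable_of_deriv (K : fieldType) (p : {poly K}) (c : K) (a b : nat) :
    c != 0 -> ~~ root p 0 -> ~~ root p 1 -> ~~ root p (-1) ->
    p^`() = c *: ('X^a * ('X^2 - 1) ^+ b) ->
  separable_poly p.
Proof.
move=> c_neq0 p0 p1 pN1 dp; rewrite unlock /separable_poly dp coprimepZr //.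
rewrite coprimepMr; apply/andP; split; apply: coprimep_expr.
  by rewrite -['X]subr0 -polyC0 coprimep_XsubC.
have -> : ('X^2 - 1 : {poly K}) = ('X - 1%:P) * ('X - (-1)%:P).
  by rewrite polyCN polyC1; ring.
by rewrite coprimepMr !coprimep_XsubC p1 pN1.
Qed.

Lemma expr_period8 (R : pzRingType) (x : R) (a b : nat) : x ^+ 9 = x ->
  (0 < a)%N -> (0 < b)%N -> (a = b %[mod 8])%N -> x ^+ a = x ^+ b.
Proof.
move=> x9 a_gt0 b_gt0 eq_ab.
have periodic q k : x ^+ (k + q * 8).+1 = x ^+ k.+1.
  elim: q => [|q IHq]; first by rewrite mul0n addn0.
  have -> : ((k + q.+1 * 8).+1 = (k + q * 8) + 9)%N by rewrite mulSn; lia.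
  by rewrite exprD x9 -exprSr.
have reduce k : (0 < k)%N -> x ^+ k = x ^+ (k.-1 %% 8)%N.+1.
  by move=> k_gt0; rewrite -(periodic (k.-1 %/ 8)%N); congr (_ ^+ _); lia.
by rewrite reduce // [RHS]reduce //; congr (_ ^+ _); lia.
Qed.

Lemma odd_sqr_mod8 (n : nat) : odd n -> (n * n = 1 %[mod 8])%N.
Proof.
rewrite -modnMm -(odd_mod n (erefl : odd 8 = false)).
have : (n %% 8 < 8)%N by rewrite ltn_pmod.
by case: (n %% 8)%N => [|[|[|[|[|[|[|[|]]]]]]]].
Qed.

Lemma cube_fixed_oddX (R : pzRingType) (x : R) (n : nat) : x ^+ 9 = x -> odd n ->
  (x ^+ n) ^+ 3 = x ^+ n -> x ^+ 3 = x.
Proof.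
move=> x9 odd_n xn3; have n_gt0 : (0 < n)%N by rewrite odd_gt0.
have xnn : x ^+ (n * n) = x.
  by rewrite (expr_period8 x9 _ _ (odd_sqr_mod8 odd_n)) // muln_gt0 n_gt0.
by rewrite -{1}xnn -exprM mulnAC !exprM xn3 -exprM xnn.
Qed.

Section Char3.

Variable F : fieldType.
Hypothesis F_char3 : (3%:R : F) = 0.

Lemma char3_N1_neq1 : (-1 : F) != 1.
Proof.
apply/eqP => N1_eq1; have : (1 : F) = 3%:R - (1 - -1) by ring.
by rewrite F_char3 N1_eq1 subrr subr0 => /eqP; rewrite oner_eq0.
Qed.

Lemma char3_cube_fixed (x : F) :
  (x ^+ 3 == x) = (x \in [seq (k%:R : F) | k <- iota 0 3]).
Proof.
rewrite -subr_eq0.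
have -> : x ^+ 3 - x = x * (x - 1) * (x - 2%:R) + 3%:R * (x ^+ 2 - x) by ring.
by rewrite F_char3 mul0r addr0 !mulf_eq0 !subr_eq0 /= !inE orbA.
Qed.

Lemma char3_sqr_neqN1 (y : F) : y ^+ 3 = y -> y ^+ 2 != -1.
Proof.
move/eqP; rewrite char3_cube_fixed /= !inE.
case/or3P => /eqP ->.
- by rewrite expr0n eq_sym oppr_eq0 oner_eq0.
- by rewrite expr1n eq_sym char3_N1_neq1.
have -> : (2%:R : F) ^+ 2 = 1 + 3%:R by ring.
by rewrite F_char3 addr0 eq_sym char3_N1_neq1.
Qed.

Lemma char3_cubeB_sqr (u : F) : u ^+ 9 = u -> u ^+ 3 != u -> (u ^+ 3 - u) ^+ 2 = -1.
Proof.
move=> u9 u3; set t := u ^+ 3 - u.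
have t3 : t ^+ 3 = - t.
  have -> : t ^+ 3 = u ^+ 9 - u ^+ 3 - 3%:R * (u ^+ 7 - u ^+ 5) by rewrite /t; ring.
  by rewrite u9 F_char3 mul0r subr0 /t opprB.
have t_neq0 : t != 0 by rewrite subr_eq0.
apply/eqP; rewrite -subr_eq0 opprK; apply/eqP/(mulfI t_neq0).
by rewrite mulr0 mulrDr -exprS t3 mulr1 addNr.
Qed.

Lemma char3_value_expr4 (u : F) : u ^+ 9 = u -> u ^+ 3 != u ->
  (u - u ^+ 3 - 1) ^+ 4 = -1.
Proof.
move=> u9 u3; have t2 := char3_cubeB_sqr u9 u3; set t := u ^+ 3 - u in t2.
have -> : (u - u ^+ 3 - 1) ^+ 4 = (t ^+ 2 + 1) * (t ^+ 2 + 4%:R * t + 5%:R) - 1 - 3%:R.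
  by rewrite /t; ring.
by rewrite t2 addNr mul0r sub0r F_char3 subr0.
Qed.

Lemma char3_not_sqr (y v : F) : y ^+ 9 = y -> v ^+ 4 = -1 -> y ^+ 2 != v.
Proof.
move=> y9 v4; apply/eqP => yv; have y8 : y ^+ 8 = -1 by rewrite -v4 -yv -exprM.
have y_neq0 : y != 0.
  by apply: contra_eq_neq y8 => ->; rewrite expr0n eq_sym oppr_eq0 oner_eq0.
have : y ^+ 8 = 1 by apply: (mulfI y_neq0); rewrite -exprS y9 mulr1.
by rewrite y8; apply/eqP; exact: char3_N1_neq1.
Qed.

End Char3.

Lemma F3_char : (3%:R : 'F_3) = 0.
Proof. exact: pchar_Fp_0. Qed.

Lemma F3_cube (x : 'F_3) : x ^+ 3 = x.
Proof. by rewrite -{2}(expf_card x) card_Fp. Qed.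

Lemma F3_nat_eq0 (k : nat) : ((k%:R : 'F_3) == 0) = (3 %| k)%N.
Proof. by rewrite (dvdn_pcharf (pchar_Fp (isT : prime 3))). Qed.

Lemma F3_poly_char : (3%:R : {poly 'F_3}) = 0.
Proof. by rewrite -polyC_natr F3_char. Qed.

Lemma card9_char3 (F : finFieldType) : #|F| = 9%N -> (3%:R : F) = 0.
Proof. by move=> card_F; apply/pcharf0/(@card_finPcharP _ 3 2). Qed.

Lemma card9_expr9 (F : finFieldType) (x : F) : #|F| = 9%N -> x ^+ 9 = x.
Proof. by move=> card_F; rewrite -{2}(expf_card x) card_F. Qed.

Lemma card9_sqrtN1 (F : finFieldType) : #|F| = 9%N -> exists a : F, a ^+ 2 = -1.
Proof.
move=> card_F; have F_char3 := card9_char3 card_F.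
have /existsP [z z3] : [exists z : F, z ^+ 3 != z].
  apply: contraT; rewrite negb_exists => /forallP F_cube_fixed.
  have : (#|F| <= size [seq (k%:R : F) | k <- iota 0 3])%N; last by rewrite card_F.
  apply: leq_trans (card_size _); apply/subset_leq_card/subsetP => z _.
  by rewrite -char3_cube_fixed //; exact: negbNE.
by exists (z ^+ 3 - z); apply: char3_cubeB_sqr; rewrite // card9_expr9.
Qed.

Definition monic_shape (g : nat) (H : {poly int}) : Prop :=
  [/\ H \is monic, size H = (2 * g + 2)%N, H`_(2 * g) = 0 & H`_0 = -1].

(* [x ^+ 9 = x] and [x ^+ 3 = x] cut out F_9 and F_3; [-1] is a non-square in
   F_3 but a square in F_9, while [v ^+ 4 = -1] makes [v] a non-square in F_9. *)
Definition F9_values (H : {poly int}) : Prop :=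
  forall F : fieldType, (3%:R : F) = 0 -> forall x : F, x ^+ 9 = x ->
    (x ^+ 3 = x -> (red F H).[x] = -1) /\ (x ^+ 3 != x -> (red F H).[x] ^+ 4 = -1).

Definition admissible (g : nat) (H : {poly int}) : Prop :=
  [/\ monic_shape g H, separable_poly (red 'F_3 H) & F9_values H].

Definition mod3_conds (g : nat) (H : {poly int}) : seq (nat * int * int) :=
  [seq (i, 3%:Z, coef_a g H i) | i <- iota 2 (2 * g)].

Lemma mod3_conds_valid (g : nat) (H : {poly int}) : all (valid_cond g) (mod3_conds g H).
Proof.
rewrite all_map; apply/allP => i; rewrite mem_iota /= => i_range.
by rewrite /valid_cond /= andbT; lia.
Qed.

Lemma admissible_min_model (g : nat) (H : {poly int}) :
  admissible g H -> is_min_model g H.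
Proof.
move=> [[mon_H size_H H2g H0] sep_H _]; split=> //; first exact: separable_red_rat sep_H.
have g_gt0 : (0 < g)%N.
  by move: H2g; rewrite lt0n; apply: contra_eqN => /eqP ->; rewrite H0 oppr_eq0 oner_eq0.
have range : (2 <= 2 * g + 1 <= 2 * g + 1)%N by lia.
move=> p p_prime /(_ _ range); rewrite /coef_a subnn H0 dvdzE /= dvdn1 => /eqP p_pow1.
have : (1 < p ^ (2 * (2 * g + 1)))%N.
  by rewrite -{1}(expn0 p) ltn_exp2l ?prime_gt1 //; lia.
by rewrite p_pow1.
Qed.

Lemma admissible_in_family (g : nat) (H : {poly int}) :
  admissible g H -> in_family g (mod3_conds g H) H.
Proof.
move=> admH; split; first exact: admissible_min_model.
by rewrite all_map; apply/allP => i _; rewrite /= /sat_cond /=.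
Qed.

Lemma family_coef_mod3 (g : nat) (H f : {poly int}) : monic_shape g H ->
  in_family g (mod3_conds g H) f -> forall i : nat, (f`_i == H`_i %[mod 3])%Z.
Proof.
move=> [mon_H size_H H2g _] [[mon_f size_f f2g _ _] /allP conds_f] i.
have [i_lt|i_ge] := ltnP i (2 * g).
  have := conds_f (2 * g + 1 - i, 3%:Z, coef_a g H (2 * g + 1 - i))%N.
  rewrite map_f ?mem_iota; last by lia.
  by rewrite /sat_cond /coef_a /= subKn //; [apply | lia].
have [->|i_neq] := eqVneq i (2 * g)%N; first by rewrite f2g H2g.
have [->|i_neq'] := eqVneq i (2 * g + 1)%N.
  have : lead_coef f = lead_coef H by rewrite (eqP mon_f) (eqP mon_H).
  by rewrite /lead_coef size_f size_H addn2 addn1 /= => ->.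
by rewrite !nth_default ?size_f ?size_H //; lia.
Qed.

Lemma red_family (F : nzRingType) (g : nat) (H f : {poly int}) :
    (3%:R : F) = 0 -> monic_shape g H -> in_family g (mod3_conds g H) f ->
  red F f = red F H.
Proof.
move=> F_char3 shape_H fam_f; apply/polyP => i; rewrite !coef_map /=.
have := family_coef_mod3 shape_H fam_f i; rewrite eqz_mod_dvd => /dvdzP [k fH].
by rewrite -(subrK H`_i f`_i) fH rmorphD rmorphM /= (rmorph_nat _ 3) F_char3 mulr0 add0r.
Qed.

Lemma F9_values_F3 (H : {poly int}) :
  F9_values H -> forall x : 'F_3, (red 'F_3 H).[x] = -1.
Proof.
move=> val_H x; apply: (val_H _ F3_char x _).1; last exact: F3_cube.
by rewrite (exprM x 3 3) !F3_cube.
Qed.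

Lemma no_F3_points (H f : {poly int}) : red 'F_3 f = red 'F_3 H -> F9_values H ->
  forall x y : 'F_3, ~ aff_pt f x y.
Proof.
move=> red_fH val_H x y; rewrite /aff_pt red_fH F9_values_F3 // => /eqP.
by apply/negP/char3_sqr_neqN1; [exact: F3_char | exact: F3_cube].
Qed.

Lemma F9_points (F : finFieldType) (H f : {poly int}) : #|F| = 9%N ->
    red F f = red F H -> F9_values H ->
  exists alpha : F,
    alpha \notin [seq (k%:R : F) | k <- iota 0 3] /\
    forall x y : F, aff_pt f x y <->
      (x \in [seq (k%:R : F) | k <- iota 0 3] /\ (y = alpha \/ y = - alpha)).
Proof.
move=> card_F red_fH val_H; have F_char3 := card9_char3 card_F.
have [alpha alpha2] := card9_sqrtN1 card_F.
exists alpha; split.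
  rewrite -char3_cube_fixed //; apply/eqP => alpha3.
  by have := char3_sqr_neqN1 F_char3 alpha3; rewrite alpha2 eqxx.
move=> x y; rewrite /aff_pt red_fH -char3_cube_fixed //.
have [val_F3 val_F9] := val_H F F_char3 x (card9_expr9 x card_F).
have [x3|x3] := eqVneq (x ^+ 3) x.
  rewrite val_F3 // -alpha2; split=> [/eqP|[_ [] ->]]; rewrite ?sqrrN //.
  rewrite -subr_eq0 subr_sqr mulf_eq0 subr_eq0 addr_eq0.
  by case/orP => /eqP; auto.
split=> [y2|[]] //.
by have := char3_not_sqr F_char3 (card9_expr9 y card_F) (val_F9 x3); rewrite y2 eqxx.
Qed.

Lemma F9_values_of_cubeB (H : {poly int}) :
    (forall F : fieldType, (3%:R : F) = 0 -> forall x : F, x ^+ 9 = x ->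
       exists u : F,
         [/\ u ^+ 9 = u, u ^+ 3 = u <-> x ^+ 3 = x & (red F H).[x] = u - u ^+ 3 - 1]) ->
  F9_values H.
Proof.
move=> val_H F F_char3 x x9; have [u [u9 u3 ->]] := val_H F F_char3 x x9.
split=> [/u3 ->|x3]; first by rewrite subrr sub0r.
exact (char3_value_expr4 F_char3 u9 (contra_neq (proj1 u3) x3)).
Qed.

Lemma separable_red_F3 (H : {poly int}) (c : 'F_3) (a b : nat) :
    F9_values H -> c != 0 -> (red 'F_3 H)^`() = c *: ('X^a * ('X^2 - 1) ^+ b) ->
  separable_poly (red 'F_3 H).
Proof.
move=> val_H c_neq0 dH; apply: (separable_of_deriv c_neq0 _ _ _ dH);
  by rewrite /root F9_values_F3 // oppr_eq0 oner_eq0.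
Qed.

Definition trinomial (n e : nat) : {poly int} := 'X^n - 'X^e - 1.

Lemma red_trinomial (R : nzRingType) (n e : nat) :
  red R (trinomial n e) = 'X^n - 'X^e - 1.
Proof. by rewrite /red /trinomial !rmorphB /= !map_polyXn rmorph1. Qed.

Lemma trinomial_F9_values (n e : nat) : odd n -> (0 < e)%N ->
  (e = 3 * n %[mod 8])%N -> F9_values (trinomial n e).
Proof.
move=> odd_n e_gt0 e_mod8; apply: F9_values_of_cubeB => F _ x x9.
have n_gt0 : (0 < n)%N by rewrite odd_gt0.
exists (x ^+ n); split.
- by rewrite -exprM mulnC exprM x9.
- split=> [|x3]; first exact: cube_fixed_oddX x9 odd_n.
  by rewrite -exprM mulnC exprM x3.
- rewrite red_trinomial !hornerE -exprM mulnC.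
  by rewrite (expr_period8 x9 e_gt0 _ e_mod8) // muln_gt0.
Qed.

Lemma deriv_red_trinomial (n e : nat) :
  (red 'F_3 (trinomial n e))^`() = n%:R *: 'X^(n.-1) - e%:R *: 'X^(e.-1).
Proof. by rewrite red_trinomial !derivB !derivXn deriv1 subr0 !scaler_nat. Qed.

(* The three cases make the derivative over F_3 equal to [n X^(n-1)],
   [-e X^(e-1)] or [n X^(e-1) (X^2 - 1)^3]. *)
Definition deriv_splits_F3 (n e : nat) : bool :=
  [|| (3 %| e) && ~~ (3 %| n), (3 %| n) && ~~ (3 %| e) | (n == e + 6) && ~~ (3 %| n)]%N.

Lemma separable_trinomial (n e : nat) :
    F9_values (trinomial n e) -> (0 < e)%N -> deriv_splits_F3 n e ->
  separable_poly (red 'F_3 (trinomial n e)).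
Proof.
move=> val_T e_gt0; rewrite /deriv_splits_F3 => /or3P [].
- case/andP=> e3 n3; apply: (separable_red_F3 (c := n%:R) (a := n.-1) (b := 0) val_T).
    by rewrite F3_nat_eq0.
  have e0 : (e%:R : 'F_3) = 0 by apply/eqP; rewrite F3_nat_eq0.
  by rewrite deriv_red_trinomial e0 scale0r subr0 expr0 mulr1.
- case/andP=> n3 e3; apply: (separable_red_F3 (c := - e%:R) (a := e.-1) (b := 0) val_T).
    by rewrite oppr_eq0 F3_nat_eq0.
  have n0 : (n%:R : 'F_3) = 0 by apply/eqP; rewrite F3_nat_eq0.
  by rewrite deriv_red_trinomial n0 scale0r sub0r expr0 mulr1 scaleNr.
case/andP=> /eqP n_e6 n3.
apply: (separable_red_F3 (c := n%:R) (a := e.-1) (b := 3) val_T).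
  by rewrite F3_nat_eq0.
have en : (e%:R : 'F_3) = n%:R.
  have six0 : (6%:R : 'F_3) = 0 by apply/eqP; rewrite F3_nat_eq0.
  by rewrite n_e6 natrD six0 addr0.
rewrite deriv_red_trinomial en -scalerBr (_ : n.-1 = e.-1 + 6)%N; last by lia.
congr (_ *: _); rewrite exprD.
transitivity ('X^(e.-1) * ('X^2 - 1) ^+ 3 + 3%:R * ('X^(e.-1) * ('X^4 - 'X^2))
               : {poly 'F_3}); first by ring.
by rewrite F3_poly_char mul0r addr0.
Qed.

(* No degree 7 polynomial with these values on F_9 has a derivative that
   splits over F_3, so genus 3 needs an explicit Bezout identity. *)
Lemma separable_trinomial_7_5 : separable_poly (red 'F_3 (trinomial 7 5)).
Proof.
rewrite unlock /separable_poly deriv_red_trinomial red_trinomial !scaler_nat.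
apply/Bezout_eq1_coprimepP.
exists (- 1 - 'X^4 + 'X^5, - 1 + 'X^2 + 'X^3 - 'X^4 + 'X^5 - 'X^6) => /=.
transitivity (1 + 3%:R * (2%:R * 'X^4 - 4%:R * 'X^6 - 2%:R * 'X^7 + 4%:R * 'X^8
   + 'X^9 - 'X^10 + 2%:R * 'X^11 - 2%:R * 'X^12) : {poly 'F_3}); first by ring.
by rewrite F3_poly_char mul0r addr0.
Qed.

Lemma monic_shape_XnD (g : nat) (R : {poly int}) :
  (size R <= 2 * g)%N -> R`_0 = -1 -> monic_shape g ('X^(2 * g + 1) + R).
Proof.
move=> size_R R0.
have size_lt : (size R < size ('X^(2 * g + 1) : {poly int}))%N.
  by rewrite size_polyXn; lia.
split.
- by rewrite monicE lead_coefDl // lead_coefXn.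
- by rewrite size_polyDl // size_polyXn; lia.
- by rewrite coefD coefXn (nth_default _ size_R) ltn_eqF ?addn1 //= addr0.
- by rewrite coefD coefXn ltn_eqF ?addn1 //= R0 add0r.
Qed.

Lemma admissible_trinomial (g e : nat) : (0 < e < 2 * g)%N ->
    (e = 3 * (2 * g + 1) %[mod 8])%N ->
    separable_poly (red 'F_3 (trinomial (2 * g + 1) e)) ->
  admissible g (trinomial (2 * g + 1) e).
Proof.
move=> /andP [e_gt0 e_lt] e_mod8 sep_T; split=> //; last first.
  by apply: trinomial_F9_values => //; rewrite oddD oddM.
rewrite /trinomial -addrA -opprD; apply: monic_shape_XnD.
  by rewrite size_polyN size_polyDl ?size_polyXn ?size_polyC ?oner_eq0 //; lia.
by rewrite coefN coefD coefXn coef1 ltn_eqF //= add0r.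
Qed.

Lemma exists_trinomial_exponent (g : nat) : (5 <= g)%N ->
  exists e : nat, [/\ (0 < e < 2 * g)%N, (e = 3 * (2 * g + 1) %[mod 8])%N &
                      deriv_splits_F3 (2 * g + 1) e].
Proof.
move=> g_ge5; rewrite /deriv_splits_F3; have : (g %% 6 < 6)%N by rewrite ltn_pmod.
case g_mod6: (g %% 6)%N => [|[|[|[|[|[|//]]]]]] _.
- by exists (2 * g - 5)%N; split; lia.
- by exists (2 * g - 1)%N; split; lia.
- by exists (2 * g - 5)%N; split; lia.
- by exists (2 * g - 9)%N; split; lia.
- by exists (2 * g - 13)%N; split; lia.
- by exists (2 * g - 1)%N; split; lia.
Qed.

Lemma exists_admissible_genus4 : exists H : {poly int}, admissible 4 H.
Proof.
pose H : {poly int} := 'X^9 + ('X^3 + 'X - 1).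
have red_H (R : nzRingType) : red R H = 'X^9 + ('X^3 + 'X - 1).
  by rewrite /red !(rmorphD, rmorphB) /= !map_polyXn map_polyX rmorphN1.
have val_H : F9_values H.
  apply: F9_values_of_cubeB => F F_char3 x x9.
  have N3 : (- x) ^+ 3 = - x ^+ 3 by ring.
  have N9 : (- x) ^+ 9 = - x ^+ 9 by ring.
  exists (- x); split; first by rewrite N9 x9.
    by rewrite N3; split=> [/oppr_inj|->].
  rewrite red_H !(hornerD, hornerN, hornerXn, hornerX) -polyC1 hornerC x9 N3.
  transitivity (- x - - x ^+ 3 - 1 + 3%:R * x); first by ring.
  by rewrite F_char3 mul0r addr0.
exists H; split=> //.
  apply: monic_shape_XnD; last by rewrite coefB coefD coefXn coefX coef1.
  by rewrite -addrA size_polyDl ?size_polyXn // -polyC1 size_XsubC.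
apply: (separable_red_F3 (c := 1) (a := 0) (b := 0) val_H (oner_neq0 _)).
rewrite red_H !expr0 mulr1 scale1r !(derivD, derivN) !derivXn derivX deriv1 oppr0 addr0.
transitivity (1 + 3%:R * ('X^2 + 3%:R * 'X^8) : {poly 'F_3}); first by ring.
by rewrite F3_poly_char mul0r addr0.
Qed.

Lemma exists_admissible (g : nat) : (3 <= g)%N -> exists H : {poly int}, admissible g H.
Proof.
move=> g_ge3; have [-> | g_neq3] := eqVneq g 3%N.
  exists (trinomial 7 5).
  exact: (admissible_trinomial (g := 3)) separable_trinomial_7_5.
have [-> | g_neq4] := eqVneq g 4%N; first exact: exists_admissible_genus4.
have [|e [e_range e_mod8 e_sep]] := @exists_trinomial_exponent g; first lia.
exists (trinomial (2 * g + 1) e); apply: admissible_trinomial => //.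
apply: separable_trinomial e_sep; last lia.
by apply: trinomial_F9_values => //; [rewrite oddD oddM | lia].
Qed.

Theorem lemma6p5 (g : nat) (hg : (3 <= g)%N) :
  exists conds : seq (nat * int * int),
    all (valid_cond g) conds /\
    (exists f : {poly int}, in_family g conds f) /\
    forall f : {poly int}, in_family g conds f ->
      [/\ good_red3 f,
          (* C_{F_3}(F_3) = {infinity}: no affine F_3-points *)
          (forall x y : 'F_3, ~ aff_pt f x y) &
          (* C_{F_3}(F_9) = {infinity, (0,+-a), (1,+-a), (2,+-a)}, a in F_9 \ F_3 *)
          forall F : finFieldType, #|F| = 9%N ->
            exists alpha : F,
              alpha \notin [seq (k%:R : F) | k <- iota 0 3] /\
              forall x y : F, aff_pt f x y <->
                (x \in [seq (k%:R : F) | k <- iota 0 3] /\ (y = alpha \/ y = - alpha))].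
Proof.
have [H admH] := exists_admissible hg; have [shape_H sep_H val_H] := admH.
exists (mod3_conds g H); split; first exact: mod3_conds_valid.
split; first by exists H; exact: admissible_in_family.
move=> f fam_f.
have red_f (F : nzRingType) (F_char3 : (3%:R : F) = 0) :=
  red_family F_char3 shape_H fam_f.
split.
- by rewrite /good_red3 (red_f _ F3_char).
- exact: no_F3_points (red_f _ F3_char) val_H.
- by move=> F card_F; apply: F9_points card_F (red_f _ (card9_char3 card_F)) val_H.
Qed.
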